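(* Let $N\ge 2$ and $b_1,\dots,b_N\in\{0,1\}$ with $b_N=1$ and $\sum_{j=1}^N b_j 2^{N-j}>1$. Let $s_b$ be the largest real root of $P_b(x)=x^N-\sum_{j=1}^N b_jx^{N-j}$. Then $s_b$ is an algebraic integer of degree greater than $1$. *)

From HB Require Import structures.
From mathcomp Require Import all_boot all_order all_algebra.
From mathcomp Require Import all_classical all_reals.
Set Implicit Arguments. Unset Strict Implicit. Unset Printing Implicit Defensive.
Import Order.TTheory GRing.Theory Num.Theory.
Local Open Scope ring_scope.

(* b : nat -> bool, only b 1, ..., b N matter (b_j = 1 iff b j = true). *)
Definition Pb (R : nzRingType) (N : nat) (b : nat -> bool) : {poly R} :=
  'X^N - \sum_(1 <= j < N.+1) (b j)%:R *: 'X^(N - j).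

Definition algebraic_integer (R : nzRingType) (x : R) : Prop :=
  integralOver (intr : int -> R) x.

(* The degree of x (degree of its minimal polynomial over Q) is > 1:
   no nonzero rational polynomial of degree <= 1 vanishes at x. *)
Definition alg_degree_gt1 (R : fieldType) (x : R) : Prop :=
  forall q : {poly rat}, q != 0 -> root (map_poly (ratr : rat -> R) q) x -> (2 < size q)%N.

From HB Require Import structures.
From mathcomp Require Import all_boot all_order all_algebra.
From mathcomp Require Import all_classical all_reals.
From mathcomp Require Import all_field zify lra.
Set Implicit Arguments. Unset Strict Implicit. Unset Printing Implicit Defensive.
Import Order.TTheory GRing.Theory Num.Theory.
Local Open Scope ring_scope.

(* [P_b] is monic with integer coefficients, so [s_b] is an algebraic integer.
   Since [b_N = 1] and the binary number [b_1...b_N] exceeds 1, at least two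
   [b_j] equal 1, hence [P_b(1) < 0]; and [P_b(x) > 0] for [x >= 2] because
   [x^N > 1 + x + ... + x^(N-1)].  So the largest root lies in (1, 2).  A
   rational root of a monic integer polynomial is an integer, and there is no
   integer in (1, 2), so [s_b] is irrational: its degree is not 1. *)

Lemma map_Pb (A B : nzRingType) (f : {rmorphism A -> B}) N b :
  map_poly f (Pb A N b) = Pb B N b.
Proof.
rewrite /Pb rmorphB /= map_polyXn rmorph_sum /=; congr (_ - _).
by apply: eq_bigr => j _; rewrite map_polyZ map_polyXn rmorph_nat.
Qed.

Lemma Pb_monic (A : nzRingType) N b : (0 < N)%N -> Pb A N b \is monic.
Proof.
move=> N_gt0; apply/monicP; rewrite /Pb lead_coefDl ?lead_coefXn //.
rewrite size_polyN size_polyXn ltnS big_nat_cond.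
apply: (big_ind (fun p : {poly A} => size p <= N)%N).
- by rewrite size_poly0.
- by move=> p q hp hq; rewrite (leq_trans (size_polyD _ _)) // geq_max hp hq.
- move=> j /andP[/andP[j_gt0 _] _]; rewrite (leq_trans (size_scale_leq _ _)) //.
  by rewrite size_polyXn; lia.
Qed.

Lemma horner_Pb (A : comNzRingType) N b (x : A) :
  (Pb A N b).[x] = x ^+ N - \sum_(1 <= j < N.+1) (b j)%:R * x ^+ (N - j).
Proof.
rewrite /Pb hornerD hornerN horner_sum hornerXn; congr (_ - _).
by apply: eq_bigr => j _; rewrite hornerZ hornerXn.
Qed.

Lemma Pb_int_algebraic_integer (A : nzRingType) N b (x : A) :
  (0 < N)%N -> root (Pb A N b) x -> algebraic_integer x.
Proof. by move=> N_gt0 rx; exists (Pb int N b); rewrite ?Pb_monic ?map_Pb. Qed.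

Lemma sum_expr_le_exprB1 (R : realDomainType) (x : R) n :
  2 <= x -> \sum_(k < n) x ^+ k <= x ^+ n - 1.
Proof.
move=> x_ge2; rewrite subrX1 ler_peMl //; last lra.
by rewrite sumr_ge0 // => k _; rewrite exprn_ge0 //; lra.
Qed.

Lemma Pb_gt0 (R : realDomainType) N b (x : R) : 2 <= x -> 0 < (Pb R N b).[x].
Proof.
move=> x_ge2; rewrite horner_Pb subr_gt0.
apply: (le_lt_trans (y := \sum_(1 <= j < N.+1) x ^+ (N - j))).
  apply: ler_sum => j _; case: (b j); rewrite ?mul1r ?mul0r ?exprn_ge0 //; lra.
have -> : \sum_(1 <= j < N.+1) x ^+ (N - j) = \sum_(k < N) x ^+ k.
  rewrite big_add1 /= big_mkord (reindex_inj rev_ord_inj) /=.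
  by apply: eq_bigr => k _; rewrite subnS subKn.
by have := sum_expr_le_exprB1 N x_ge2; lra.
Qed.

Lemma horner_Pb1 (R : comNzRingType) N b :
  (Pb R N b).[1] = 1 - (\sum_(1 <= j < N.+1) (b j : nat))%:R.
Proof.
rewrite horner_Pb expr1n natr_sum; congr (_ - _).
by apply: eq_bigr => j _; rewrite expr1n mulr1.
Qed.

Lemma two_digits_of_binary N (b : nat -> bool) :
  (0 < N)%N -> b N -> (1 < \sum_(1 <= j < N.+1) b j * 2 ^ (N - j))%N ->
  (2 <= \sum_(1 <= j < N.+1) (b j : nat))%N.
Proof.
move=> N_gt0 bN; rewrite !big_nat_recr //= bN subnn mul1n => high_gt0.
suff : (0 < \sum_(1 <= j < N) (b j : nat))%N by lia.
rewrite -(ltn_pmul2l (expn_gt0 2 N)) muln0 big_distrr /=.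
apply: leq_trans (_ : 0 < \sum_(1 <= j < N) b j * 2 ^ (N - j))%N _; first lia.
apply: leq_sum => j _; case: (b j); rewrite ?mul0n ?muln0 // mul1n muln1.
by rewrite leq_pexp2l // leq_subr.
Qed.

Lemma max_root_Pb_in_1_2 (R : rcfType) N (b : nat -> bool) (s : R) :
  (2 <= \sum_(1 <= j < N.+1) (b j : nat))%N ->
  root (Pb R N b) s -> (forall r, root (Pb R N b) r -> r <= s) ->
  1 < s < 2.
Proof.
move=> two_digits rs s_max.
have P1_lt0 : (Pb R N b).[1] < 0.
  by rewrite horner_Pb1 subr_lt0 ltr1n.
have P2_gt0 : 0 < (Pb R N b).[2] := Pb_gt0 N b (lexx 2).
have [x /andP[x_ge1 _] rx] : exists2 x, 1 <= x <= 2 & root (Pb R N b) x.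
  by apply: poly_ivt; rewrite ?ler1n ?(ltW P1_lt0) ?(ltW P2_gt0).
have x_neq1 : x != 1 by apply: contraTneq rx => ->; rewrite /root lt_eqF.
apply/andP; split.
  by apply: lt_le_trans (s_max x rx); rewrite lt_neqAle eq_sym x_neq1.
by rewrite ltNge; apply: contraTN rs => /(Pb_gt0 N b) /gt_eqF; rewrite /root => ->.
Qed.

Lemma rat_root_monic_int (p : {poly int}) (r : rat) :
  p \is monic -> root (map_poly intr p) r -> r \is a Num.int.
Proof.
move=> p_monic rr; have rC : root (map_poly intr p) (ratr r : algC).
  move: rr; rewrite -(fmorph_root (ratr : {rmorphism rat -> algC})) -map_poly_comp.
  by rewrite (eq_map_poly (fun z => ratr_int _ z)).
have : (ratr r : algC) \is a Num.int.
  apply: Cint_rat_Aint (Crat_rat r) (root_monic_Aint rC _ _).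
    by rewrite monicE lead_coef_map_eq ?(monicP p_monic) ?oner_eq0.
  by apply/polyOverP => i; rewrite coef_map rpred_int.
case/intrP => m rm; apply/intrP; exists m.
by apply: (fmorph_inj (ratr : {rmorphism rat -> algC})); rewrite rmorph_int.
Qed.

Lemma root_size2_rat (R : numFieldType) (q : {poly rat}) (x : R) :
  q != 0 -> (size q <= 2)%N -> root (map_poly ratr q) x ->
  exists r : rat, x = ratr r.
Proof.
move=> q_neq0 q_size2 rx; have [q_size1|q_size_gt1] := leqP (size q) 1.
  move: rx q_neq0; rewrite (size1_polyC q_size1) map_polyC rootC fmorph_eq0.
  by move/eqP ->; rewrite eqxx.
have q_size : size q = 2%N by lia.
have q1_neq0 : q`_1 != 0 by rewrite -[1%N]/(2.-1) -q_size -lead_coefE lead_coef_eq0.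
exists (- q`_0 / q`_1); apply/eqP; move: rx.
rewrite /root horner_coef size_map_poly q_size !big_ord_recr big_ord0 /= add0r.
rewrite !coef_map /= expr0 expr1 mulr1 fmorph_div rmorphN /= addr_eq0.
by move/eqP ->; rewrite opprK mulrC mulKf ?fmorph_eq0.
Qed.

Lemma no_int_in_1_2 (r : rat) : r \is a Num.int -> ~~ (1 < r < 2).
Proof. by case/intrP => m ->; rewrite -[1]/(1%:~R) -[2]/(2%:~R) !ltr_int; lia. Qed.

Theorem mainTheorem5 (R : realType) (N : nat) (b : nat -> bool) (s : R) :
  (2 <= N)%N ->
  b N = true ->
  (1 < \sum_(1 <= j < N.+1) b j * 2 ^ (N - j))%N ->
  root (Pb R N b) s ->
  (forall r : R, root (Pb R N b) r -> r <= s) ->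
  algebraic_integer s /\ alg_degree_gt1 s.
Proof.
move=> N_ge2 bN binary_gt1 rs s_max; have N_gt0 : (0 < N)%N by lia.
split; first exact: Pb_int_algebraic_integer rs.
have s_in_1_2 := max_root_Pb_in_1_2 (two_digits_of_binary N_gt0 bN binary_gt1) rs s_max.
move=> q q_neq0 rq; rewrite ltnNge; apply/negP => q_size2.
have [r s_eq] := root_size2_rat q_neq0 q_size2 rq.
have r_int : r \is a Num.int.
  apply: rat_root_monic_int (Pb_monic _ b N_gt0) _.
  by rewrite map_Pb -(fmorph_root (ratr : {rmorphism rat -> R})) map_Pb /= -s_eq.
move: (no_int_in_1_2 r_int).
by rewrite -!(ltr_rat R) rmorph1 ratr_nat -s_eq s_in_1_2.
Qed.
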